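(* Let $n_1<n_2<n_3$ be positive integers with $\gcd(n_1,n_2,n_3)=1$ minimally generating a nonsymmetric numerical semigroup $S$, with $\gcd(\delta_1,\delta_3)=1$. Let $\mathbf x\in\{\boldsymbol\lambda,\boldsymbol\mu\}$ and let $1\le i\le\max\{\delta_1,\delta_3\}$ be such that the B\'ezout couple $\mathbf x_i$ (of type $\mathbf x$) is reducible. Then there exists a positive integer $l<i$ such that $\tau_{\mathbf x_l}^-\le\tau_{\mathbf x_i}^-$ (componentwise), where $\mathbf x_l$ is the B\'ezout couple of $l$ of the same type.
   Context: $S=\langle n_1,n_2,n_3\rangle$; minimally generated means no $n_i$ lies in the submonoid generated by the other two; $S$ is symmetric if, with $F=\max(\mathbb Z\setminus S)$, $x\in\mathbb Z\setminus S$ implies $F-x\in S$. For $\{i,j,k\}=\{1,2,3\}$, $c_i=\min\{c\in\mathbb Z^+: cn_i\in\langle n_j,n_k\rangle\}$ and, $S$ being nonsymmetric, $r_{ij},r_{ik}$ are the unique positive integers with $c_in_i=r_{ij}n_j+r_{ik}n_k$; moreover $c_i=r_{ji}+r_{ki}$. Set $\delta_1=c_1-r_{12}-r_{13}>0$, $\delta_3=r_{31}+r_{32}-c_3>0$, $\mathbf v_1=(c_1,-r_{12},-r_{13})$, $\mathbf v_3=(r_{31},r_{32},-c_3)$. For $i\in\{1,\ldots,\max\{\delta_1,\delta_3\}\}$: $\boldsymbol\lambda_i$ is the unique $(a,b)\in\mathbb Z^2$ with $a\delta_1+b\delta_3=i$, $0<b\le\delta_1$; $\boldsymbol\mu_i$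 is the unique $(a,b)$ with $a\delta_1+b\delta_3=i$, $0<a\le\delta_3$. $\boldsymbol\lambda_i$ is reducible if $\boldsymbol\lambda_i=\boldsymbol\lambda_j+\boldsymbol\lambda_k$ for some $j,k\in\{1,\ldots,\max\{\delta_1,\delta_3\}\}$, and similarly for $\boldsymbol\mu_i$. For $(a,b)\in\mathbb Z^2$, $\tau_{(a,b)}=a\mathbf v_1+b\mathbf v_3\in\mathbb Z^3$. For $\mathbf z\in\mathbb Z^3$, $\mathbf z^+,\mathbf z^-\in\mathbb N^3$ are the unique vectors with $\mathbf z=\mathbf z^+-\mathbf z^-$ and $\mathbf z^+\cdot\mathbf z^-=0$. *)

From mathcomp Require Import all_boot all_order all_algebra.
Set Implicit Arguments. Unset Strict Implicit. Unset Printing Implicit Defensive.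
Import Order.TTheory GRing.Theory Num.Theory.
Local Open Scope ring_scope.

Definition in_sg2 (a b x : nat) : Prop :=
  exists p q : nat, x = (p * a + q * b)%N.

Definition in_sg3 (n1 n2 n3 : nat) (x : int) : Prop :=
  exists p q r : nat, x = ((p * n1 + q * n2 + r * n3)%N)%:Z.

Definition minimally_generated (n1 n2 n3 : nat) : Prop :=
  ~ in_sg2 n2 n3 n1 /\ ~ in_sg2 n1 n3 n2 /\ ~ in_sg2 n1 n2 n3.

Definition is_frobenius (n1 n2 n3 : nat) (F : int) : Prop :=
  ~ in_sg3 n1 n2 n3 F /\ (forall x : int, ~ in_sg3 n1 n2 n3 x -> x <= F).

Definition symmetric_sg (n1 n2 n3 : nat) : Prop :=
  forall F : int, is_frobenius n1 n2 n3 F ->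
  forall x : int, ~ in_sg3 n1 n2 n3 x -> in_sg3 n1 n2 n3 (F - x).

Definition is_c (ni nj nk c : nat) : Prop :=
  (0 < c)%N /\ in_sg2 nj nk (c * ni) /\
  (forall c' : nat, (0 < c')%N -> in_sg2 nj nk (c' * ni) -> (c <= c')%N).

Inductive btype := Lambda | Mu.

Definition bezout (t : btype) (d1 d3 i : int) (x : int * int) : Prop :=
  x.1 * d1 + x.2 * d3 = i /\
  match t with
  | Lambda => 0 < x.2 <= d1
  | Mu => 0 < x.1 <= d3
  end.

Definition reducible (t : btype) (d1 d3 : int) (x : int * int) : Prop :=
  exists (j k : int) (xj xk : int * int),
    1 <= j <= Num.max d1 d3 /\ 1 <= k <= Num.max d1 d3 /\
    bezout t d1 d3 j xj /\ bezout t d1 d3 k xk /\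
    x = (xj.1 + xk.1, xj.2 + xk.2).

(* tau_(a,b) = a v1 + b v3, v1 = (c1,-r12,-r13), v3 = (r31,r32,-c3) *)
Definition tau (c1 r12 r13 r31 r32 c3 : int) (x : int * int) : int * int * int :=
  (x.1 * c1 + x.2 * r31, - (x.1 * r12) + x.2 * r32, - (x.1 * r13) - x.2 * c3).

Definition negpart (z : int) : int := Num.max (- z) 0.

Definition neg_le (z w : int * int * int) : Prop :=
  negpart z.1.1 <= negpart w.1.1 /\ negpart z.1.2 <= negpart w.1.2 /\
  negpart z.2 <= negpart w.2.

From mathcomp Require Import all_boot all_order all_algebra.
From mathcomp Require Import zify ring.
Set Implicit Arguments. Unset Strict Implicit. Unset Printing Implicit Defensive.
Import Order.TTheory GRing.Theory Num.Theory.
Local Open Scope ring_scope.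

(** Write [x_i = x_j + x_k] with [i = j + k], so [0 < j, k < i].  Since [tau]
    is linear, [tau x_i = tau x_j + tau x_k].  The defining relations
    [c1 n1 = r12 n2 + r13 n3] and [c3 n3 = r31 n1 + r32 n2] together with
    [n1 < n2 < n3] fix the signs of two coordinates of [tau] on every Bezout
    couple of a given type, uniformly in its index.  On a coordinate where
    [tau x_j] and [tau x_k] have the same sign, the negative part of the sum
    dominates both negative parts; on the one remaining coordinate it
    dominates at least one of them, and that one is [x_l]. *)

Definition same_sign (u w : int) : Prop :=
  (u <= 0 /\ w <= 0) \/ (0 <= u /\ 0 <= w).

Definition add3 (u w : int * int * int) : int * int * int :=
  (u.1.1 + w.1.1, u.1.2 + w.1.2, u.2 + w.2).

Lemma negpart_add_same_sign (u w : int) : same_sign u w ->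
  negpart u <= negpart (u + w) /\ negpart w <= negpart (u + w).
Proof. by rewrite /same_sign /negpart; lia. Qed.

Lemma negpart_add_or (u w : int) :
  negpart u <= negpart (u + w) \/ negpart w <= negpart (u + w).
Proof. by rewrite /negpart; lia. Qed.

Lemma neg_le_add_or (u w : int * int * int) :
  [\/ same_sign u.1.1 w.1.1 /\ same_sign u.1.2 w.1.2,
      same_sign u.1.1 w.1.1 /\ same_sign u.2 w.2 |
      same_sign u.1.2 w.1.2 /\ same_sign u.2 w.2] ->
  neg_le u (add3 u w) \/ neg_le w (add3 u w).
Proof.
case: u w => [[u1 u2] u3] [[w1 w2] w3]; rewrite /neg_le /add3 /=.
move=> [[/negpart_add_same_sign s1 /negpart_add_same_sign s2]
      | [/negpart_add_same_sign s1 /negpart_add_same_sign s3]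
      | [/negpart_add_same_sign s2 /negpart_add_same_sign s3]].
- by case: (negpart_add_or u3 w3) => ?; [left | right]; lia.
- by case: (negpart_add_or u2 w2) => ?; [left | right]; lia.
- by case: (negpart_add_or u1 w1) => ?; [left | right]; lia.
Qed.

Lemma tau_add (c1 r12 r13 r31 r32 c3 : int) (x y : int * int) :
  tau c1 r12 r13 r31 r32 c3 (x.1 + y.1, x.2 + y.2) =
  add3 (tau c1 r12 r13 r31 r32 c3 x) (tau c1 r12 r13 r31 r32 c3 y).
Proof. by rewrite /tau /add3 /=; congr (_, _, _); ring. Qed.

Lemma ltr_of_cross_mul (X Y m n : int) :
  0 < m < n -> X * n = Y * m -> 0 < Y -> X < Y.
Proof. by move=> *; nia. Qed.

Lemma bezout_coef_le0 (d d' a b : int) :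
  0 < d -> 0 < d' -> 0 < b -> a * d + b * d' <= Num.max d d' -> a <= 0.
Proof.
move=> d_gt0 d'_gt0 b_gt0 le_max; case: (lerP a 0) => // a_gt0.
have : d <= a * d by nia.
have : d' <= b * d' by nia.
lia.
Qed.

Lemma comb_gt0 (d d' r c a b : int) :
  0 < d -> 0 <= r -> 0 < b -> 0 < a * d + b * d' -> r * d' < c * d ->
  0 < a * r + b * c.
Proof.
move=> d_gt0 r_ge0 b_gt0 sum_gt0 lt_rc.
have e : d * (a * r + b * c) = r * (a * d + b * d') + b * (c * d - r * d')
  by ring.
have : 0 < d * (a * r + b * c) by rewrite e; nia.
nia.
Qed.

Section DefiningRelations.

Variables n1 n2 n3 c1 r12 r13 c3 r31 r32 : int.
Hypotheses (n1_gt0 : 0 < n1) (lt_n12 : n1 < n2) (lt_n23 : n2 < n3).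
Hypotheses (c1_ge0 : 0 <= c1) (c3_ge0 : 0 <= c3).
Hypotheses (r12_gt0 : 0 < r12) (r13_gt0 : 0 < r13).
Hypotheses (r31_gt0 : 0 < r31) (r32_gt0 : 0 < r32).
Hypothesis rel1 : c1 * n1 = r12 * n2 + r13 * n3.
Hypothesis rel3 : c3 * n3 = r31 * n1 + r32 * n2.

Let d1 := c1 - r12 - r13.
Let d3 := r31 + r32 - c3.

Lemma r13_d3_lt_c3_d1 : r13 * d3 < c3 * d1.
Proof.
have cross : (c3 * r12 + r13 * r32) * n2 = (c3 * c1 - r13 * r31) * n1.
  have -> : (c3 * c1 - r13 * r31) * n1 = c3 * (c1 * n1) - r13 * (r31 * n1)
    by ring.
  have -> : r31 * n1 = c3 * n3 - r32 * n2 by rewrite rel3; ring.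
  by rewrite rel1; ring.
have := ltr_of_cross_mul _ cross; rewrite /d1 /d3; nia.
Qed.

Lemma r31_d1_lt_c1_d3 : r31 * d1 < c1 * d3.
Proof.
have cross : (c1 * c3 - r31 * r13) * n3 = (c1 * r32 + r31 * r12) * n2.
  have -> : (c1 * c3 - r31 * r13) * n3 = c1 * (c3 * n3) - r31 * (r13 * n3)
    by ring.
  have -> : r13 * n3 = c1 * n1 - r12 * n2 by rewrite rel1; ring.
  by rewrite rel3; ring.
have := ltr_of_cross_mul _ cross; rewrite /d1 /d3; nia.
Qed.

Hypotheses (d1_gt0 : 0 < d1) (d3_gt0 : 0 < d3).

Lemma tau_lambda_sign (l : int) (x : int * int) :
  1 <= l <= Num.max d1 d3 -> bezout Lambda d1 d3 l x ->
  0 < (tau c1 r12 r13 r31 r32 c3 x).1.2 /\ (tau c1 r12 r13 r31 r32 c3 x).2 < 0.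
Proof.
case: x => a b /andP[l_ge1 l_le] [/= eq_l /andP[b_gt0 _]].
have a_le0 : a <= 0 by apply: (bezout_coef_le0 d1_gt0 d3_gt0 b_gt0); lia.
have : 0 < a * r13 + b * c3.
  by apply: (comb_gt0 d1_gt0 _ b_gt0 _ r13_d3_lt_c3_d1); lia.
rewrite /tau /=; nia.
Qed.

Lemma tau_mu_sign (l : int) (x : int * int) :
  1 <= l <= Num.max d1 d3 -> bezout Mu d1 d3 l x ->
  0 < (tau c1 r12 r13 r31 r32 c3 x).1.1 /\ (tau c1 r12 r13 r31 r32 c3 x).1.2 < 0.
Proof.
case: x => a b /andP[l_ge1 l_le] [/= eq_l /andP[a_gt0 _]].
have b_le0 : b <= 0.
  by apply: (bezout_coef_le0 d3_gt0 d1_gt0 a_gt0); rewrite maxC; lia.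
have : 0 < b * r31 + a * c1.
  by apply: (comb_gt0 d3_gt0 _ a_gt0 _ r31_d1_lt_c1_d3); lia.
rewrite /tau /=; nia.
Qed.

Lemma tau_bezout_same_sign (t : btype) (j k : int) (xj xk : int * int) :
  1 <= j <= Num.max d1 d3 -> 1 <= k <= Num.max d1 d3 ->
  bezout t d1 d3 j xj -> bezout t d1 d3 k xk ->
  let u := tau c1 r12 r13 r31 r32 c3 xj in
  let w := tau c1 r12 r13 r31 r32 c3 xk in
  [\/ same_sign u.1.1 w.1.1 /\ same_sign u.1.2 w.1.2,
      same_sign u.1.1 w.1.1 /\ same_sign u.2 w.2 |
      same_sign u.1.2 w.1.2 /\ same_sign u.2 w.2].
Proof.
case: t => hj hk bj bk u w; rewrite /u /w /same_sign.
- have := tau_lambda_sign hj bj; have := tau_lambda_sign hk bk.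
  by move=> *; apply: Or33; lia.
- have := tau_mu_sign hj bj; have := tau_mu_sign hk bk.
  by move=> *; apply: Or31; lia.
Qed.

End DefiningRelations.

Theorem lemma2p13 (n1 n2 n3 : nat) (c1 r12 r13 c3 r31 r32 : nat)
  (t : btype) (i : int) (xi : int * int) :
  (0 < n1)%N -> (n1 < n2)%N -> (n2 < n3)%N ->
  gcdn (gcdn n1 n2) n3 = 1%N ->
  minimally_generated n1 n2 n3 ->
  ~ symmetric_sg n1 n2 n3 ->
  is_c n1 n2 n3 c1 -> (0 < r12)%N -> (0 < r13)%N ->
  (c1 * n1 = r12 * n2 + r13 * n3)%N ->
  is_c n3 n1 n2 c3 -> (0 < r31)%N -> (0 < r32)%N ->
  (c3 * n3 = r31 * n1 + r32 * n2)%N ->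
  let d1 : int := c1%:Z - r12%:Z - r13%:Z in
  let d3 : int := r31%:Z + r32%:Z - c3%:Z in
  0 < d1 -> 0 < d3 ->
  gcdz d1 d3 = 1 ->
  1 <= i <= Num.max d1 d3 ->
  bezout t d1 d3 i xi ->
  reducible t d1 d3 xi ->
  exists (l : int) (xl : int * int),
    0 < l < i /\ bezout t d1 d3 l xl /\
    neg_le (tau c1%:Z r12%:Z r13%:Z r31%:Z r32%:Z c3%:Z xl)
           (tau c1%:Z r12%:Z r13%:Z r31%:Z r32%:Z c3%:Z xi).
Proof.
move=> n1_gt0 lt_n12 lt_n23 _ _ _ _ r12_gt0 r13_gt0 rel1 _ r31_gt0 r32_gt0 rel3.
move=> d1 d3 d1_gt0 d3_gt0 _ _ [eq_i _] [j [k [xj [xk [hj [hk [bj [bk eq_xi]]]]]]]].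
subst xi.
have rel1z : c1%:Z * n1%:Z = r12%:Z * n2%:Z + r13%:Z * n3%:Z.
  by rewrite -!PoszM -PoszD rel1.
have rel3z : c3%:Z * n3%:Z = r31%:Z * n1%:Z + r32%:Z * n2%:Z.
  by rewrite -!PoszM -PoszD rel3.
have := tau_bezout_same_sign _ _ _ _ _ _ _ _ _ rel1z rel3z d1_gt0 d3_gt0 hj hk bj bk.
rewrite !ltz_nat !lez_nat.
move=> /(_ n1_gt0 lt_n12 lt_n23 isT isT r12_gt0 r13_gt0 r31_gt0 r32_gt0) signs.
have [eq_j eq_k] : xj.1 * d1 + xj.2 * d3 = j /\ xk.1 * d1 + xk.2 * d3 = k.
  by case: bj; case: bk.
have eq_ijk : i = j + k by rewrite -eq_i -eq_j -eq_k /=; ring.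
rewrite tau_add; case: (neg_le_add_or signs) => neg_le_sum.
- by exists j, xj; split; [lia | split].
- by exists k, xk; split; [lia | split].
Qed.
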